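(* Let $G$ be the Cayley graph of a finitely generated group with respect to a finite symmetric generating set, and suppose its volume growth satisfies $v(n)\succeq e^{n^{\alpha}}$ for some $0<\alpha<1$. Fix any $\beta<\frac{\alpha}{\alpha+1}$, and let $\{f(n)\}$ be a sequence of nonnegative integers with $f(n)=o(e^{n^{\beta}})$. Then $G$ does not satisfy the $\{f(n)\}$-containment property.
   Context: The volume growth is $v(n)=|B_n(\mathrm{id})|$, the number of group elements at word distance at most $n$ from the identity. For functions $g,h$, $g\preceq h$ means there is $C>0$ with $g(x)\leq C h(Cx)$ for all $x$, and $h\succeq g$ means $g\preceq h$. Firefighter process on a graph $G$ with a sequence of integers $\{f(n)\}$: an initial fire occupies a finite set of vertices; at each time $n\geq 1$, at most $f(n)$ vertices that are not on fire become protected, and then the fire spreads to all unprotected neighbours of vertices on fire; once a vertex is protected or on fire it stays so forever. $G$ has the $\{f(n)\}$-containment property if for every finite initial fire there is a protection strategy (protecting at most $f(n)$ vertices at time $n$) such that the set of burning vertices is eventually constant. *)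

From Stdlib Require Import Reals List Arith ClassicalEpsilon.
Import ListNotations.
Open Scope R_scope.

Record IsGroup (T : Type) (mul : T -> T -> T) (one : T) (inv : T -> T) : Prop := {
  grp_assoc : forall x y z, mul x (mul y z) = mul (mul x y) z;
  grp_one_l : forall x, mul one x = x;
  grp_one_r : forall x, mul x one = x;
  grp_inv_l : forall x, mul (inv x) x = one;
  grp_inv_r : forall x, mul x (inv x) = one
}.

Section Cayley.
Context {T : Type} (mul : T -> T -> T) (one : T) (inv : T -> T) (Sg : list T).

Fixpoint word_eval (w : list T) : T :=
  match w with
  | [] => one
  | s :: w' => mul s (word_eval w')
  end.

Definition symmetric_set : Prop := forall s, In s Sg -> In (inv s) Sg.

(** S generates the group: every element is a product of elements of S
    (inverses are not needed since Sg is symmetric). *)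
Definition generates : Prop :=
  forall x : T, exists w : list T, Forall (fun s => In s Sg) w /\ word_eval w = x.

Definition word_le (n : nat) (x : T) : Prop :=
  exists w : list T, Forall (fun s => In s Sg) w /\ (length w <= n)%nat /\ word_eval w = x.

Definition ball_card (n m : nat) : Prop :=
  exists l : list T, NoDup l /\ length l = m /\ (forall x, In x l <-> word_le n x).

(** Volume growth v(n) = |B_n(id)| (the ball is finite, so ball_card n
    has a unique solution; epsilon picks it). *)
Definition vol (n : nat) : nat := epsilon (inhabits 0%nat) (fun m => ball_card n m).

(** Firefighter process on the Cayley graph: vertices are elements of T,
    x ~ y iff y = x * s for some s in S. *)

Definition protected (A : nat -> T -> Prop) (n : nat) (y : T) : Prop :=
  exists k, (1 <= k <= n)%nat /\ A k y.

Fixpoint burning (F0 : list T) (A : nat -> T -> Prop) (n : nat) : T -> Prop :=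
  match n with
  | O => fun y => In y F0
  | S n' => fun y =>
      burning F0 A n' y \/
      ((exists x s, burning F0 A n' x /\ In s Sg /\ y = mul x s) /\ ~ protected A (S n') y)
  end.

Definition valid_strategy (f : nat -> nat) (F0 : list T) (A : nat -> T -> Prop) : Prop :=
  forall n, (1 <= n)%nat ->
    (exists l : list T, (length l <= f n)%nat /\ forall y, A n y -> In y l) /\
    (forall y, A n y -> ~ burning F0 A (n - 1) y).

Definition containment (f : nat -> nat) : Prop :=
  forall F0 : list T, exists A : nat -> T -> Prop,
    valid_strategy f F0 A /\
    exists N, forall n, (N <= n)%nat -> forall y, burning F0 A n y <-> burning F0 A N y.

End Cayley.

(* Coulhon--Saloff-Coste isoperimetry: a finite set A with 2|A| <= v(r) has at least
   |A| / 2r outer boundary vertices.  Indeed the number e(g) of a in A with a g outside A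
   is subadditive in g, so e(g) <= r |boundary A| on the ball of radius r, while for each
   a at most |A| of the a g lie in A; double counting the pairs (a, g) gives the bound.

   Start the fire on a large ball.  Every boundary vertex of the fire burns or is
   protected at the next step, so the number b_t of burning vertices satisfies
   b_t (1 + 1/2r) <= b_(t+1) + f(1) + ... + f(t+1) whenever v(r) >= 2 b_t.  As
   v(r) >= exp(r^alpha), radii r ~ (log b_t)^(1/alpha) are admissible, and by induction
   b_t >= exp((t + T)^g) for any g < alpha / (alpha + 1) above beta: with g + g/alpha < 1
   the gain b_t / 2r beats both the increment of exp((t + T)^g) and the total budget,
   which is O(t exp(t^b1)) for some beta <= b1 < g.  Hence b_t is unbounded and the fire
   is never contained. *)

From Stdlib Require Import Reals ZArith List Lia Lra FinFun Permutation.
From Stdlib Require Import Bool ClassicalEpsilon Classical.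
From Coquelicot Require Import Rbar Hierarchy.
Import ListNotations.
Open Scope nat_scope.

Section Cardinality.
Context {T : Type}.

Definition finite_pred (P : T -> Prop) : Prop := exists l, forall x, P x -> In x l.

Definition card (P : T -> Prop) : nat :=
  epsilon (inhabits 0) (fun m => exists l, NoDup l /\ length l = m /\ forall x, In x l <-> P x).

Lemma enum_finite_pred P :
  finite_pred P -> exists l, NoDup l /\ forall x, In x l <-> P x.
Proof.
  intros [l Hl].
  set (eq_dec := fun x y : T => excluded_middle_informative (x = y)).
  exists (filter (fun x => if excluded_middle_informative (P x) then true else false)
            (nodup eq_dec l)).
  split.
  - apply NoDup_filter, NoDup_nodup.
  - intros x. rewrite filter_In, nodup_In.
    destruct (excluded_middle_informative (P x)) as [HPx|HPx].
    + split; [intros _; exact HPx | auto].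
    + split; [now intros [_ Hfalse] | tauto].
Qed.

Lemma card_spec P :
  finite_pred P -> exists l, NoDup l /\ length l = card P /\ forall x, In x l <-> P x.
Proof.
  intros HP. unfold card. apply epsilon_spec.
  destruct (enum_finite_pred P HP) as [l Hl]. now exists (length l), l.
Qed.

Lemma card_eq_length P l : NoDup l -> (forall x, In x l <-> P x) -> card P = length l.
Proof.
  intros Hl HlP.
  destruct (card_spec P) as [l' [Hl' [<- Hl'P]]]; [exists l; apply HlP|].
  apply Permutation_length, NoDup_Permutation; trivial.
  intros x. now rewrite Hl'P, HlP.
Qed.

Lemma card_ext P Q : finite_pred P -> (forall x, P x <-> Q x) -> card P = card Q.
Proof.
  intros HP HPQ. destruct (card_spec P HP) as [l [Hl [<- HlP]]].
  symmetry. apply card_eq_length; trivial. intros x. now rewrite HlP.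
Qed.

Lemma NoDup_length_le_card_add (l Q : list T) P : NoDup l -> finite_pred P ->
  (forall x, In x l -> P x \/ In x Q) -> length l <= card P + length Q.
Proof.
  intros Hl HP Hcov. destruct (card_spec P HP) as [lP [_ [<- HlP]]].
  rewrite <- length_app. apply NoDup_incl_length; trivial.
  intros x Hx. apply in_or_app. rewrite HlP. auto.
Qed.

Lemma card_le P Q : finite_pred Q -> (forall x, P x -> Q x) -> card P <= card Q.
Proof.
  intros HQ HPQ.
  assert (HP : finite_pred P) by (destruct HQ as [l Hl]; exists l; auto).
  destruct (card_spec P HP) as [l [Hl [<- HlP]]].
  rewrite <- (Nat.add_0_r (card Q)). apply (NoDup_length_le_card_add l []); trivial.
  intros x Hx. left. now apply HPQ, HlP.
Qed.

End Cardinality.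

Lemma word_le_finite {T} (mul : T -> T -> T) one Sg r : finite_pred (word_le mul one Sg r).
Proof.
  induction r as [|r [l IH]].
  - exists [one]. intros x [[|s w] [_ [Hl <-]]]; [now left | simpl in Hl; lia].
  - exists (one :: flat_map (fun s => map (mul s) l) Sg).
    intros x [[|s w] [Hw [Hl <-]]]; [now left|right].
    inversion Hw; subst. apply in_flat_map. exists s. split; trivial.
    apply (in_map (mul s)), IH. exists w. simpl in Hl. repeat split; trivial; lia.
Qed.

Lemma vol_card {T} (mul : T -> T -> T) one Sg r : vol mul one Sg r = card (word_le mul one Sg r).
Proof. reflexivity. Qed.

Lemma list_sum_map_add {A} (h1 h2 : A -> nat) l :
  list_sum (map (fun x => h1 x + h2 x) l) = list_sum (map h1 l) + list_sum (map h2 l).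
Proof. induction l; simpl; lia. Qed.

Lemma list_sum_map_le_const {A} (h : A -> nat) l k :
  (forall x, In x l -> h x <= k) -> list_sum (map h l) <= length l * k.
Proof.
  induction l as [|a l IH]; simpl; intros Hk; trivial.
  specialize (IH (fun x Hx => Hk x (or_intror Hx))). specialize (Hk a (or_introl eq_refl)). lia.
Qed.

Lemma double_counting {A B} (R : A -> B -> bool) (la : list A) (lb : list B) :
  list_sum (map (fun b => length (filter (fun a => R a b) la)) lb) =
  list_sum (map (fun a => length (filter (R a) lb)) la).
Proof.
  induction la as [|a la IH]; simpl.
  - induction lb; simpl; auto.
  - rewrite <- IH. clear IH.
    induction lb as [|b lb IHb]; simpl; trivial.
    rewrite IHb. destruct (R a b); simpl; lia.
Qed.

Section Isoperimetry.
Context {T : Type} (mul : T -> T -> T) (one : T) (inv : T -> T) (Sg : list T).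
Hypothesis Hgrp : IsGroup T mul one inv.

Lemma mul_cancel_r a b g : mul a g = mul b g -> a = b.
Proof.
  intros H. rewrite <- (grp_one_r _ _ _ _ Hgrp a), <- (grp_one_r _ _ _ _ Hgrp b).
  now rewrite <- (grp_inv_r _ _ _ _ Hgrp g), !(grp_assoc _ _ _ _ Hgrp), H.
Qed.

Lemma mul_cancel_l a b g : mul g a = mul g b -> a = b.
Proof.
  intros H. rewrite <- (grp_one_l _ _ _ _ Hgrp a), <- (grp_one_l _ _ _ _ Hgrp b).
  now rewrite <- (grp_inv_l _ _ _ _ Hgrp g), <- !(grp_assoc _ _ _ _ Hgrp), H.
Qed.

Definition memb (A : list T) (y : T) : bool :=
  if excluded_middle_informative (In y A) then true else false.

Lemma memb_spec A y : memb A y = true <-> In y A.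
Proof. unfold memb. destruct (excluded_middle_informative (In y A)); now split. Qed.

Definition outer_boundary (A : list T) (y : T) : Prop :=
  ~ In y A /\ exists x s, In x A /\ In s Sg /\ y = mul x s.

Lemma outer_boundary_finite A : finite_pred (outer_boundary A).
Proof.
  exists (flat_map (fun x => map (mul x) Sg) A).
  intros y [_ [x [s [Hx [Hs ->]]]]]. apply in_flat_map. eauto using in_map.
Qed.

Definition escapees (A : list T) (g : T) : list T :=
  filter (fun a => negb (memb A (mul a g))) A.

Lemma In_escapees A g a : In a (escapees A g) <-> In a A /\ ~ In (mul a g) A.
Proof.
  unfold escapees. rewrite filter_In.
  destruct (memb A (mul a g)) eqn:E; simpl.
  - apply memb_spec in E. split; [now intros [_ F] | tauto].
  - assert (~ In (mul a g) A) by (rewrite <- memb_spec, E; discriminate). tauto.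
Qed.

Lemma escapees_one A : escapees A one = [].
Proof.
  destruct (escapees A one) as [|a l] eqn:E; trivial.
  assert (Ha : In a (escapees A one)) by (rewrite E; now left).
  apply In_escapees in Ha as [Ha Hout]. rewrite (grp_one_r _ _ _ _ Hgrp) in Hout. tauto.
Qed.

Lemma length_escapees_generator A s : NoDup A -> In s Sg ->
  length (escapees A s) <= card (outer_boundary A).
Proof.
  intros HA Hs. destruct (card_spec _ (outer_boundary_finite A)) as [D [_ [<- HD]]].
  rewrite <- (length_map (fun a => mul a s)).
  apply NoDup_incl_length.
  - apply Injective_map_NoDup; [intros x y; apply mul_cancel_r|].
    now apply NoDup_filter.
  - intros y Hy. apply in_map_iff in Hy as [a [<- Ha]].
    apply In_escapees in Ha as [Ha Hout]. apply HD. split; eauto 6.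
Qed.

(* An element escaping under [g h] escapes under [g], or lands in [A] under [g] and then
   escapes under [h]. *)
Lemma length_escapees_mul A g h : NoDup A ->
  length (escapees A (mul g h)) <= length (escapees A g) + length (escapees A h).
Proof.
  intros HA.
  set (Y := filter (fun a => memb A (mul a g) && negb (memb A (mul (mul a g) h))) A).
  apply Nat.le_trans with (length (escapees A g ++ Y)).
  - apply NoDup_incl_length; [now apply NoDup_filter|].
    intros a Ha. apply In_escapees in Ha as [Ha Hout]. apply in_or_app.
    destruct (memb A (mul a g)) eqn:Eg.
    + right. apply filter_In. split; trivial.
      rewrite Eg, <- (grp_assoc _ _ _ _ Hgrp). simpl.
      destruct (memb A (mul a (mul g h))) eqn:Egh; trivial.
      now apply memb_spec in Egh.
    + left. apply In_escapees. split; trivial. rewrite <- memb_spec, Eg. discriminate.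
  - rewrite length_app. apply Nat.add_le_mono_l.
    rewrite <- (length_map (fun a => mul a g) Y).
    apply NoDup_incl_length.
    + apply Injective_map_NoDup; [intros x y; apply mul_cancel_r|].
      now apply NoDup_filter.
    + intros y Hy. apply in_map_iff in Hy as [a [<- Ha]].
      apply filter_In in Ha as [_ Ha]. apply andb_prop in Ha as [Hin Hout].
      apply In_escapees. rewrite <- !memb_spec. split; trivial.
      destruct (memb A (mul (mul a g) h)); discriminate.
Qed.

Lemma length_escapees_word A w : NoDup A -> Forall (fun s => In s Sg) w ->
  length (escapees A (word_eval mul one w)) <= length w * card (outer_boundary A).
Proof.
  intros HA. induction w as [|s w IH]; intros Hw; simpl.
  - now rewrite escapees_one.
  - inversion Hw; subst.
    pose proof (length_escapees_mul A s (word_eval mul one w) HA).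
    pose proof (length_escapees_generator A s HA ltac:(assumption)).
    specialize (IH ltac:(assumption)). lia.
Qed.

(* Double counting of the pairs (a, g) with a in [A] and g in the ball [B]: at most
   |A|^2 of them have a g in [A], and at most |B| r |boundary| have a g outside [A]. *)
Theorem isoperimetric A r : NoDup A -> 2 * length A <= vol mul one Sg r ->
  length A <= 2 * r * card (outer_boundary A).
Proof.
  intros HA Hvol. rewrite vol_card in Hvol.
  destruct (card_spec _ (word_le_finite mul one Sg r)) as [B [HB [HBlen HBball]]].
  rewrite <- HBlen in Hvol.
  set (stay := fun g => length (filter (fun a => memb A (mul a g)) A)).
  assert (Hstay : list_sum (map stay B) <= length A * length A).
  { unfold stay. rewrite (double_counting (fun a g => memb A (mul a g))).
    apply list_sum_map_le_const. intros a _.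
    rewrite <- (length_map (mul a)). apply NoDup_incl_length.
    - apply Injective_map_NoDup; [intros x y; apply mul_cancel_l|]. now apply NoDup_filter.
    - intros y Hy. apply in_map_iff in Hy as [g [<- Hg]].
      apply filter_In in Hg as [_ Hg]. now apply memb_spec. }
  assert (Hesc : list_sum (map (fun g => length (escapees A g)) B)
                 <= length B * (r * card (outer_boundary A))).
  { apply list_sum_map_le_const. intros g Hg.
    destruct (proj1 (HBball g) Hg) as [w [Hw [Hlen <-]]].
    apply Nat.le_trans with (1 := length_escapees_word A w HA Hw).
    now apply Nat.mul_le_mono_r. }
  assert (Htotal : list_sum (map stay B) + list_sum (map (fun g => length (escapees A g)) B)
                   = length B * length A).
  { rewrite <- list_sum_map_add. unfold stay, escapees.
    rewrite (map_ext _ (fun _ => length A)) by (intros g; apply filter_length).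
    clear. induction B; simpl; lia. }
  nia.
Qed.

End Isoperimetry.

Fixpoint partial_sum (f : nat -> nat) (t : nat) : nat :=
  match t with O => O | S t' => partial_sum f t' + f (S t') end.

Section Firefighting.
Context {T : Type} (mul : T -> T -> T) (Sg : list T).

Lemma burning_finite F0 A t : finite_pred (burning mul Sg F0 A t).
Proof.
  induction t as [|t [l IH]]; [exists F0; auto|].
  exists (l ++ flat_map (fun x => map (mul x) Sg) l).
  intros y [Hy|[[x [s [Hx [Hs ->]]]] _]]; apply in_or_app; [left; auto|right].
  apply in_flat_map. eauto using in_map.
Qed.

Lemma protected_cover f F0 A : valid_strategy mul Sg f F0 A ->
  forall t, exists Q, length Q <= partial_sum f t /\ forall y, protected A t y -> In y Q.
Proof.
  intros Hvalid t. induction t as [|t [Q [HQ HQcov]]].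
  - exists []. split; trivial. intros y [k [Hk _]]. lia.
  - destruct (Hvalid (S t) ltac:(lia)) as [[l [Hl Hlcov]] _].
    exists (Q ++ l). split; [rewrite length_app; simpl; lia|].
    intros y [k [Hk Hky]]. apply in_or_app.
    destruct (Nat.eq_dec k (S t)) as [->|Hne]; [right; now apply Hlcov|].
    left. apply HQcov. exists k. split; trivial. lia.
Qed.

Lemma outer_boundary_burning F0 A t L y :
  (forall x, In x L <-> burning mul Sg F0 A t x) -> outer_boundary mul Sg L y ->
  burning mul Sg F0 A (S t) y \/ protected A (S t) y.
Proof.
  intros HL [_ [x [s [Hx [Hs ->]]]]].
  destruct (classic (protected A (S t) (mul x s))) as [Hp|Hp]; [now right|].
  left. right. split; trivial. exists x, s. rewrite <- HL. auto.
Qed.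

Lemma card_burning_mono F0 A t :
  card (burning mul Sg F0 A t) <= card (burning mul Sg F0 A (S t)).
Proof. apply card_le; [apply burning_finite|]. intros y Hy. now left. Qed.

End Firefighting.

Lemma card_burning_recurrence {T} mul one inv (Sg : list T) (Hgrp : IsGroup T mul one inv)
    f F0 A t r :
  valid_strategy mul Sg f F0 A ->
  2 * card (burning mul Sg F0 A t) <= vol mul one Sg r ->
  card (burning mul Sg F0 A t) * (2 * r + 1) <=
  2 * r * (card (burning mul Sg F0 A (S t)) + partial_sum f (S t)).
Proof.
  intros Hvalid Hvol.
  destruct (card_spec _ (burning_finite mul Sg F0 A t)) as [L [HL [HLlen HLburn]]].
  rewrite <- HLlen in Hvol |- *.
  destruct (card_spec _ (outer_boundary_finite mul Sg L)) as [D [HD [HDlen HDbd]]].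
  destruct (protected_cover mul Sg f F0 A Hvalid (S t)) as [Q [HQ HQcov]].
  pose proof (isoperimetric mul one inv Sg Hgrp L r HL Hvol) as Hiso.
  assert (Hspread : length (L ++ D) <= card (burning mul Sg F0 A (S t)) + length Q).
  { apply NoDup_length_le_card_add; [|apply burning_finite|].
    - apply NoDup_app; trivial. intros y Hy HyD. now apply HDbd in HyD as [].
    - intros y Hy. apply in_app_or in Hy as [Hy|Hy].
      + left. left. now apply HLburn.
      + apply HDbd in Hy.
        destruct (outer_boundary_burning mul Sg F0 A t L y HLburn Hy); auto. }
  rewrite length_app in Hspread. nia.
Qed.

Open Scope R_scope.

Lemma exp_le_compat x y : x <= y -> exp x <= exp y.
Proof. intros [H| ->]; [left; now apply exp_increasing | apply Rle_refl]. Qed.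

Lemma Rpower_pos x e : 0 < Rpower x e.
Proof. apply exp_pos. Qed.

Lemma Rpower_ge_1 x e : 1 <= x -> 0 <= e -> 1 <= Rpower x e.
Proof. intros Hx He. rewrite <- (Rpower_O x) by lra. now apply Rle_Rpower. Qed.

Lemma ln_le_self x : 0 < x -> ln x <= x.
Proof. intros Hx. pose proof (exp_ineq1_le (ln x)). rewrite exp_ln in H; lra. Qed.

Lemma exists_nat_between y : 0 <= y -> exists n : nat, y <= INR n <= y + 1.
Proof.
  intros Hy. destruct (archimed y) as [Hup Hup1].
  assert (Hz : (0 <= up y)%Z) by (apply le_IZR; simpl; lra).
  exists (Z.to_nat (up y)). rewrite INR_IZR_INZ, Z2Nat.id by exact Hz. lra.
Qed.

Lemma eventually_INR (P : R -> Prop) :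
  Rbar_locally p_infty P -> eventually (fun n => P (INR n)).
Proof.
  intros [M HM]. destruct (exists_nat_between (Rmax M 0)) as [N HN]; [apply Rmax_r|].
  exists (S N). intros n Hn. apply HM. apply le_INR in Hn. rewrite S_INR in Hn.
  pose proof (Rmax_l M 0). lra.
Qed.

Lemma eventually_ge c : Rbar_locally p_infty (fun x => c <= x).
Proof. exists c. intros x Hx. lra. Qed.

Lemma eventually_Rpower_ge e c : 0 < e -> Rbar_locally p_infty (fun x => c <= Rpower x e).
Proof.
  intros He. set (c1 := Rmax c 1).
  assert (Hc : c <= c1 /\ 1 <= c1) by (split; [apply Rmax_l | apply Rmax_r]).
  exists (Rpower c1 (/ e)). intros x Hx.
  replace c1 with (Rpower (Rpower c1 (/ e)) e) in Hc.
  - assert (Rpower (Rpower c1 (/ e)) e <= Rpower x e); [|lra].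
    apply Rle_Rpower_l; [lra|]. split; [apply Rpower_pos | lra].
  - rewrite Rpower_mult, Rinv_l, Rpower_1; lra.
Qed.

Lemma Rpower_succ_le x g : 0 < x -> 0 <= g <= 1 ->
  Rpower (x + 1) g <= Rpower x g + Rpower x (g - 1).
Proof.
  intros Hx Hg. pose proof (Rinv_0_lt_compat x Hx).
  replace (x + 1) with (x * (1 + / x)) by (field; lra).
  rewrite <- Rpower_mult_distr by lra.
  assert (Hconc : Rpower (1 + / x) g <= 1 + / x).
  { rewrite <- (Rpower_1 (1 + / x)) at 2 by lra. apply Rle_Rpower; lra. }
  replace (g - 1) with (g + - (1)) by ring.
  rewrite Rpower_plus, Rpower_Ropp, Rpower_1 by lra.
  pose proof (Rpower_pos x g).
  apply Rle_trans with (Rpower x g * (1 + / x)); [apply Rmult_le_compat_l; lra | right; ring].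
Qed.

(* From [exp (-d) >= 1 - d]. *)
Lemma exp_le_1_add_2x d : 0 <= d <= / 2 -> exp d <= 1 + 2 * d.
Proof.
  intros Hd. pose proof (exp_ineq1_le (- d)) as Hm. rewrite exp_Ropp in Hm.
  pose proof (exp_pos d).
  assert (Hprod : (1 - d) * exp d <= 1).
  { apply Rmult_le_reg_r with (/ exp d); [now apply Rinv_0_lt_compat|].
    rewrite Rmult_assoc, Rinv_r, Rmult_1_l, Rmult_1_r; lra. }
  nra.
Qed.

(* After taking logarithms, [ln x <= (2 / g) x^(g/2)] makes [p ln x] negligible against [x^g]. *)
Lemma eventually_exp_Rpower_dominates K p b g : 0 < K -> 0 < g -> b < g ->
  Rbar_locally p_infty (fun x => K * Rpower x p * exp (Rpower x b) <= exp (Rpower x g)).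
Proof.
  intros HK Hg Hb.
  apply (filter_imp (fun x => 1 <= x /\ 3 <= Rpower x (g - b) /\
           6 * Rabs p / g <= Rpower x (g / 2) /\ 3 * ln K <= Rpower x g)).
  2:{ repeat apply filter_and; apply eventually_ge || apply eventually_Rpower_ge; lra. }
  intros x (Hx & Hgb & Hhalf & HlnK).
  unfold Rpower at 1. rewrite <- (exp_ln K) at 1 by lra. rewrite <- !exp_plus.
  apply exp_le_compat.
  assert (Hsplit_b : Rpower x g = Rpower x b * Rpower x (g - b)).
  { rewrite <- Rpower_plus. f_equal. ring. }
  assert (Hsplit_half : Rpower x g = Rpower x (g / 2) * Rpower x (g / 2)).
  { rewrite <- Rpower_plus. f_equal. field. }
  assert (Hln : ln x <= 2 / g * Rpower x (g / 2)).
  { pose proof (ln_le_self _ (Rpower_pos x (g / 2))) as Hl. rewrite ln_Rpower in Hl.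
    apply Rmult_le_reg_l with (g / 2); [lra|].
    replace (g / 2 * (2 / g * Rpower x (g / 2))) with (Rpower x (g / 2)) by (field; lra).
    lra. }
  assert (Hlnx : 0 <= ln x).
  { rewrite <- ln_1. destruct (Rle_lt_or_eq_dec 1 x Hx) as [Hlt| <-]; [|lra].
    left. apply ln_increasing; lra. }
  assert (Hp : p * ln x <= Rabs p * (2 / g * Rpower x (g / 2))).
  { apply Rle_trans with (Rabs p * ln x).
    - apply Rmult_le_compat_r; [lra | apply Rle_abs].
    - apply Rmult_le_compat_l; [apply Rabs_pos | lra]. }
  pose proof (Rpower_pos x b). pose proof (Rpower_pos x (g / 2)). pose proof (Rabs_pos p).
  assert (Rabs p * (2 / g * Rpower x (g / 2)) * 3 <= Rpower x g).
  { rewrite Hsplit_half.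
    replace (Rabs p * (2 / g * Rpower x (g / 2)) * 3) with (Rpower x (g / 2) * (6 * Rabs p / g))
      by (field; lra).
    apply Rmult_le_compat_l; lra. }
  nra.
Qed.

Lemma partial_sum_mono f m n : (m <= n)%nat -> (partial_sum f m <= partial_sum f n)%nat.
Proof. induction 1; simpl; lia. Qed.

Lemma partial_sum_le f (h : R -> R) N : (1 <= N)%nat ->
  (forall u, 1 <= u -> 0 <= h u) -> (forall u v, 1 <= u <= v -> h u <= h v) ->
  (forall n, (N <= n)%nat -> INR (f n) <= h (INR n)) ->
  forall t, INR (partial_sum f t) <= INR (partial_sum f N) + INR t * h (INR t).
Proof.
  intros HN Hpos Hmono Hf. induction t as [|t IH].
  - simpl. pose proof (pos_INR (partial_sum f N)). lra.
  - assert (Ht1 : 1 <= INR (S t)) by (apply (le_INR 1); lia).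
    pose proof (Hpos _ Ht1).
    destruct (le_lt_dec (S t) N) as [Hle|Hlt].
    + pose proof (le_INR _ _ (partial_sum_mono f _ _ Hle)). nra.
    + simpl partial_sum. rewrite plus_INR.
      assert (Ht : 1 <= INR t) by (apply (le_INR 1); lia).
      assert (h (INR t) <= h (INR (S t))) by (apply Hmono; rewrite S_INR; lra).
      specialize (Hf (S t) ltac:(lia)). rewrite S_INR in *. nra.
Qed.

Lemma partial_sum_subexp f beta b1 : 0 <= b1 -> beta <= b1 ->
  (exists N, forall n, (N <= n)%nat -> INR (f n) <= exp (Rpower (INR n) beta)) ->
  exists M0, 0 <= M0 /\
  forall t, INR (partial_sum f t) <= M0 + INR t * exp (Rpower (INR t) b1).
Proof.
  intros Hb1 Hbeta [N HN]. exists (INR (partial_sum f (max N 1))). split; [apply pos_INR|].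
  apply (partial_sum_le f (fun u => exp (Rpower u b1))); [lia| intros; left; apply exp_pos | |].
  - intros u v Huv. apply exp_le_compat, Rle_Rpower_l; lra.
  - intros n Hn. apply Rle_trans with (1 := HN n ltac:(lia)).
    apply exp_le_compat, Rle_Rpower; [apply (le_INR 1); lia | lra].
Qed.

Lemma exists_growth_exponents alpha beta : 0 < alpha -> beta < alpha / (alpha + 1) ->
  exists g b1, 0 < g /\ g + g / alpha < 1 /\ 0 <= b1 < g /\ beta <= b1.
Proof.
  intros Ha Hbeta. set (m := Rmax beta 0).
  assert (Hm : beta <= m /\ 0 <= m /\ m < alpha / (alpha + 1)).
  { repeat split; [apply Rmax_l | apply Rmax_r | apply Rmax_lub_lt; trivial].
    apply Rdiv_lt_0_compat; lra. }
  set (g := (m + alpha / (alpha + 1)) / 2).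
  exists g, ((m + g) / 2). repeat split; try (unfold g; lra).
  assert (Hg : g * (alpha + 1) < alpha).
  { replace alpha with (alpha / (alpha + 1) * (alpha + 1)) at 2 by (field; lra).
    apply Rmult_lt_compat_r; unfold g; lra. }
  replace (g + g / alpha) with (g * (alpha + 1) * / alpha) by (field; lra).
  apply Rlt_le_trans with (alpha * / alpha); [|right; field; lra].
  apply Rmult_lt_compat_r; [apply Rinv_0_lt_compat|]; lra.
Qed.

Lemma exp_Rpower_succ_le x g R : 1 <= x -> 0 < g <= 1 -> 1 <= R ->
  8 * R * Rpower x (g - 1) <= 1 ->
  exp (Rpower (x + 1) g) <= exp (Rpower x g) * (1 + / (4 * R)).
Proof.
  intros Hx Hg HR Hsmall.
  set (d := Rpower (x + 1) g - Rpower x g).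
  assert (Hd0 : 0 <= d).
  { assert (Rpower x g <= Rpower (x + 1) g) by (apply Rle_Rpower_l; lra). unfold d; lra. }
  assert (Hd : 8 * R * d <= 1).
  { pose proof (Rpower_succ_le x g ltac:(lra) ltac:(lra)). unfold d. nra. }
  replace (Rpower (x + 1) g) with (Rpower x g + d) by (unfold d; ring).
  rewrite exp_plus. apply Rmult_le_compat_l; [left; apply exp_pos|].
  apply Rle_trans with (1 + 2 * d).
  - apply exp_le_1_add_2x. nra.
  - enough (2 * d <= / (4 * R)) by lra.
    apply Rmult_le_reg_l with (4 * R); [lra|]. rewrite Rinv_r; lra.
Qed.

Section Growth.
Variables (alpha g b1 M0 : R) (C : nat) (vol P : nat -> nat).
Hypothesis Halpha : 0 < alpha.
Hypothesis Hg : 0 < g.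
Hypothesis Hg_alpha : g + g / alpha < 1.
Hypothesis Hb1 : 0 <= b1 < g.
Hypothesis HM0 : 0 <= M0.
Hypothesis HC : (0 < C)%nat.
Hypothesis Hvol : forall n : nat, exp (Rpower (INR n) alpha) <= INR C * INR (vol (C * n)).
Hypothesis HP : forall t : nat, INR (P t) <= M0 + INR t * exp (Rpower (INR t) b1).

(* Radii [C n] with [n >= c x^theta = (3 x^g)^(1/alpha)] are admissible at time [x]; the 3
   absorbs [(x + 1)^g <= 2 x^g] and [ln (2 C) <= x^g]. *)
Let c := Rpower 3 (/ alpha).
Let theta := g / alpha.

Lemma C_ge_1 : 1 <= INR C.
Proof. apply (le_INR 1). lia. Qed.

Lemma theta_pos : 0 < theta.
Proof. unfold theta. now apply Rdiv_lt_0_compat. Qed.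

Lemma g_le_1 : g <= 1.
Proof. pose proof theta_pos. unfold theta in *. lra. Qed.

Definition burning_recurrence (b : nat -> nat) : Prop :=
  (forall t, (b t <= b (S t))%nat) /\
  forall t r, (2 * b t <= vol r)%nat -> (b t * (2 * r + 1) <= 2 * r * (b (S t) + P (S t)))%nat.

Definition radius_large (x : R) : Prop :=
  forall n : nat, c * Rpower x theta <= INR n -> 2 * exp (Rpower (x + 1) g) <= INR (vol (C * n)).

Definition step_inequality (x : R) : Prop :=
  forall n : nat, 1 <= INR n <= c * Rpower x theta + 1 ->
  exp (Rpower (x + 1) g) + (M0 + x * exp (Rpower x b1))
    <= exp (Rpower x g) * (1 + / (2 * (INR C * INR n))).

Lemma eventually_radius_large : Rbar_locally p_infty radius_large.
Proof.
  pose proof C_ge_1. pose proof g_le_1.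
  apply (filter_imp (fun x => 1 <= x /\ ln (2 * INR C) <= Rpower x g));
    [|apply filter_and; [apply eventually_ge | now apply eventually_Rpower_ge]].
  intros x [Hx HlnC] n Hn.
  assert (Hpow : Rpower (c * Rpower x theta) alpha = 3 * Rpower x g).
  { unfold c, theta. rewrite <- Rpower_mult_distr, !Rpower_mult by apply Rpower_pos.
    replace (/ alpha * alpha) with 1 by (field; lra).
    replace (g / alpha * alpha) with g by (field; lra). now rewrite Rpower_1 by lra. }
  assert (Hsucc : Rpower (x + 1) g <= 2 * Rpower x g).
  { pose proof (Rpower_succ_le x g ltac:(lra) ltac:(lra)).
    assert (Rpower x (g - 1) <= Rpower x g) by (apply Rle_Rpower; lra). lra. }
  assert (Hexp : Rpower (x + 1) g + ln (2 * INR C) <= Rpower (INR n) alpha).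
  { assert (Rpower (c * Rpower x theta) alpha <= Rpower (INR n) alpha); [|lra].
    apply Rle_Rpower_l; [lra|]. split; [|lra].
    apply Rmult_lt_0_compat; apply Rpower_pos. }
  apply exp_le_compat in Hexp. rewrite exp_plus, exp_ln in Hexp by lra.
  specialize (Hvol n). apply Rmult_le_reg_l with (INR C); lra.
Qed.

Lemma eventually_step_inequality : Rbar_locally p_infty step_inequality.
Proof.
  pose proof C_ge_1. pose proof g_le_1. pose proof theta_pos.
  assert (Hc : 0 < c) by apply Rpower_pos.
  set (K := INR C * (c + 1)).
  assert (HK : 1 <= K) by (unfold K; nra).
  apply (filter_imp (fun x => 1 <= x /\ 8 * K <= Rpower x (1 - g - theta) /\
    4 * K * (M0 + 1) * Rpower x (theta + 1) * exp (Rpower x b1) <= exp (Rpower x g))).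
  2:{ repeat apply filter_and.
      - apply eventually_ge.
      - apply eventually_Rpower_ge. unfold theta in *. lra.
      - apply eventually_exp_Rpower_dominates; [nra | lra | lra]. }
  intros x (Hx & Hsmall & Hdom) n Hn.
  set (R := INR C * INR n). set (E := exp (Rpower x g)).
  assert (HxT : 1 <= Rpower x theta) by (apply Rpower_ge_1; lra).
  assert (HR1 : 1 <= R) by (unfold R; nra).
  assert (HRK : R <= K * Rpower x theta) by (unfold R, K; nra).
  assert (H8 : 8 * R * Rpower x (g - 1) <= 1).
  { assert (Hone : Rpower x theta * Rpower x (g - 1) * Rpower x (1 - g - theta) = 1).
    { rewrite <- !Rpower_plus. replace (theta + (g - 1) + (1 - g - theta)) with 0 by ring.
      apply Rpower_O. lra. }
    pose proof (Rpower_pos x (g - 1)). pose proof (Rpower_pos x (1 - g - theta)).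
    apply Rle_trans with (8 * K * Rpower x theta * Rpower x (g - 1)); [nra|].
    apply Rmult_le_reg_r with (Rpower x (1 - g - theta)); [assumption|].
    transitivity (8 * K * (Rpower x theta * Rpower x (g - 1) * Rpower x (1 - g - theta)));
      [right; ring|]. rewrite Hone. lra. }
  pose proof (exp_Rpower_succ_le x g R Hx ltac:(lra) HR1 H8) as Hsucc. fold E in Hsucc.
  set (e1 := exp (Rpower x b1)) in *.
  assert (He1 : 1 <= e1).
  { unfold e1. rewrite <- exp_0. apply exp_le_compat. left. apply Rpower_pos. }
  assert (HM : 4 * R * (M0 + x * e1) <= E).
  { rewrite Rpower_plus, Rpower_1 in Hdom by lra.
    apply Rle_trans with (2 := Hdom).
    assert (1 <= x * e1) by nra.
    assert (M0 + x * e1 <= (M0 + 1) * x * e1) by nra.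
    apply Rle_trans with (4 * (K * Rpower x theta) * ((M0 + 1) * x * e1)); [|right; ring].
    apply Rmult_le_compat; nra. }
  assert (Hquarter : M0 + x * e1 <= E * / (4 * R)).
  { apply Rmult_le_reg_l with (4 * R); [lra|].
    replace (4 * R * (E * / (4 * R))) with E by (field; lra). lra. }
  replace (/ (2 * R)) with (2 * / (4 * R)) by (field; lra).
  lra.
Qed.

Lemma growth_step b t x : burning_recurrence b -> radius_large x -> step_inequality x ->
  INR (S t) <= x -> exp (Rpower x g) <= INR (b t) -> exp (Rpower (x + 1) g) <= INR (b (S t)).
Proof.
  intros [Hmono Hrec] Hrad Hstep Htx HE.
  destruct (Rle_or_lt (exp (Rpower (x + 1) g)) (INR (b t))) as [Hbig|Hsmall].
  { apply Rle_trans with (1 := Hbig). apply le_INR, Hmono. }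
  assert (Hx : 1 <= x) by (rewrite S_INR in Htx; pose proof (pos_INR t); lra).
  assert (Hc : 1 <= c) by (apply Rpower_ge_1; [lra | left; now apply Rinv_0_lt_compat]).
  assert (HxT : 1 <= Rpower x theta) by (apply Rpower_ge_1; [lra | left; apply theta_pos]).
  assert (HcxT : 1 <= c * Rpower x theta) by nra.
  destruct (exists_nat_between (c * Rpower x theta)) as [n Hn]; [lra|].
  assert (Hball : (2 * b t <= vol (C * n))%nat).
  { apply INR_le. rewrite mult_INR. simpl (INR 2). specialize (Hrad n ltac:(lra)). lra. }
  specialize (Hrec t (C * n)%nat Hball). apply le_INR in Hrec.
  rewrite !mult_INR, !plus_INR, !mult_INR in Hrec. simpl (INR 2) in Hrec. simpl (INR 1) in Hrec.
  specialize (Hstep n ltac:(lra)).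
  set (R := INR C * INR n) in *.
  assert (HR : 0 < R) by (pose proof C_ge_1; unfold R; nra).
  assert (HPt : INR (P (S t)) <= M0 + x * exp (Rpower x b1)).
  { apply Rle_trans with (1 := HP (S t)).
    assert (exp (Rpower (INR (S t)) b1) <= exp (Rpower x b1)).
    { apply exp_le_compat, Rle_Rpower_l; [lra|]. split; [apply lt_0_INR; lia | lra]. }
    pose proof (pos_INR (S t)). pose proof (exp_pos (Rpower (INR (S t)) b1)). nra. }
  assert (Hdiv : INR (b t) * (1 + / (2 * R)) <= INR (b (S t)) + INR (P (S t))).
  { apply Rmult_le_reg_l with (2 * R); [lra|].
    replace (2 * R * (INR (b t) * (1 + / (2 * R)))) with (INR (b t) * (2 * R + 1))
      by (field; lra). lra. }
  assert (exp (Rpower x g) * (1 + / (2 * R)) <= INR (b t) * (1 + / (2 * R))).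
  { apply Rmult_le_compat_r; [|exact HE]. pose proof (Rinv_0_lt_compat (2 * R)). lra. }
  lra.
Qed.

Lemma growth_lower_bound : exists T B0 : nat, forall b, burning_recurrence b ->
  (B0 <= b 0)%nat -> forall t, exp (Rpower (INR (t + T)) g) <= INR (b t).
Proof.
  destruct (filter_and _ _ eventually_radius_large eventually_step_inequality) as [M HM].
  destruct (exists_nat_between (Rmax M 0)) as [T HT]; [apply Rmax_r|].
  destruct (exists_nat_between (exp (Rpower (INR (S T)) g))) as [B0 HB0];
    [left; apply exp_pos|].
  exists (S T), B0. intros b Hb Hb0 t. induction t as [|t IH].
  - rewrite Nat.add_0_l. apply Rle_trans with (INR B0); [lra | now apply le_INR].
  - rewrite Nat.add_succ_l, S_INR.
    assert (HMx : M < INR (t + S T)).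
    { assert (INR (S T) <= INR (t + S T)) by (apply le_INR; lia).
      rewrite S_INR in *. pose proof (Rmax_l M 0). lra. }
    apply (growth_step b t); trivial; try now apply HM.
    apply le_INR. lia.
Qed.

End Growth.
Lemma exists_large_ball {T} (mul : T -> T -> T) one Sg alpha C B0 : 0 < alpha -> (0 < C)%nat ->
  (forall n : nat, exp (Rpower (INR n) alpha) <= INR C * INR (vol mul one Sg (C * n))) ->
  exists r, (B0 <= vol mul one Sg r)%nat.
Proof.
  intros Ha HC Hvol.
  destruct (eventually_INR _ (eventually_Rpower_ge alpha (INR C * INR B0) Ha)) as [n Hn].
  specialize (Hn n (le_n n)). exists (C * n)%nat.
  apply INR_le, Rmult_le_reg_l with (INR C); [now apply lt_0_INR|].
  pose proof (exp_ineq1_le (Rpower (INR n) alpha)). specialize (Hvol n). lra.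
Qed.

Lemma not_eventually_const_of_exp_growth (b : nat -> nat) g T : 0 < g ->
  (forall t, exp (Rpower (INR (t + T)) g) <= INR (b t)) ->
  ~ exists N, forall t, (N <= t)%nat -> b t = b N.
Proof.
  intros Hg Hlow [N HN].
  destruct (eventually_INR _ (eventually_Rpower_ge g (INR (b N)) Hg)) as [K HK].
  specialize (Hlow (N + K)%nat). rewrite HN in Hlow by lia.
  specialize (HK (N + K + T)%nat ltac:(lia)).
  pose proof (exp_ineq1_le (Rpower (INR (N + K + T)) g)). lra.
Qed.

Theorem theorem3
  (T : Type) (mul : T -> T -> T) (one : T) (inv : T -> T) (Sg : list T)
  (Hgrp : IsGroup T mul one inv)
  (Hsym : symmetric_set inv Sg)
  (Hgen : generates mul one Sg)
  (alpha : R) (Ha0 : 0 < alpha) (Ha1 : alpha < 1)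
  (Hgrowth : exists C : nat, (0 < C)%nat /\
     forall n : nat, exp (Rpower (INR n) alpha) <= INR C * INR (vol mul one Sg (C * n)))
  (beta : R) (Hbeta : beta < alpha / (alpha + 1))
  (f : nat -> nat)
  (Hf : forall eps : R, 0 < eps -> exists N : nat, forall n : nat, (N <= n)%nat ->
          INR (f n) <= eps * exp (Rpower (INR n) beta)) :
  ~ containment mul Sg f.
Proof.
  intros Hcont. destruct Hgrowth as [C [HC Hvol]].
  destruct (exists_growth_exponents alpha beta Ha0 Hbeta) as (g & b1 & Hg & Hga & Hb1 & Hbb1).
  assert (Hbudget : exists N, forall n, (N <= n)%nat -> INR (f n) <= exp (Rpower (INR n) beta)).
  { destruct (Hf 1 Rlt_0_1) as [N HN]. exists N. intros n Hn. rewrite <- Rmult_1_l. auto. }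
  destruct (partial_sum_subexp f beta b1 (proj1 Hb1) Hbb1 Hbudget) as (M0 & HM0 & HP).
  destruct (growth_lower_bound alpha g b1 M0 C (vol mul one Sg) (partial_sum f))
    as (T0 & B0 & Hlow); trivial.
  destruct (exists_large_ball mul one Sg alpha C B0 Ha0 HC Hvol) as [r Hr].
  destruct (card_spec _ (word_le_finite mul one Sg r)) as (F0 & HF0 & HF0len & _).
  destruct (Hcont F0) as (A & Hvalid & N & Hstable).
  apply (not_eventually_const_of_exp_growth (fun t => card (burning mul Sg F0 A t)) g T0 Hg).
  - apply Hlow.
    + split; [apply card_burning_mono|]. intros t r'. now apply card_burning_recurrence with inv.
    + rewrite (card_eq_length _ F0 HF0) by (intros y; reflexivity). now rewrite HF0len.
  - exists N. intros t Ht. apply card_ext; [apply burning_finite|]. now apply Hstable.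
Qed.
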